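(* Let $\mathcal{X}$ be a finite set, $\pi$ a probability mass function on $\mathcal{X}$ with full support, and $P$ an ergodic $\pi$-reversible transition matrix all of whose eigenvalues are non-negative. Let a group $\mathcal{G}$ act on $\mathcal{X}$, and let $G$, $M$, $B$ be the associated Gibbs, Metropolis–Hastings and Barker orbit kernels. Then $V(GPG)\le V(MPM)\le V(P)$ and $V(GPG)\le V(BPB)\le V(P)$.
   Context: With $\mathcal{O}(x)$ the orbit of $x$: $G(x,y)=\pi(y)/\pi(\mathcal{O}(x))$ for $y\in\mathcal{O}(x)$, else $0$; $M(x,y)=\frac{1}{|\mathcal{O}(x)|-1}\min\{1,\pi(y)/\pi(x)\}$ for $y\in\mathcal{O}(x)\setminus\{x\}$, $0$ off the orbit, $M(x,x)=1-\sum_{y\ne x}M(x,y)$; $B$ is the same with acceptance $\pi(y)/(\pi(x)+\pi(y))$. For $f\in\ell^2_0(\pi)=\{f:\sum_xf(x)\pi(x)=0\}$, $v(f,K)=\lim_n\frac1n\mathrm{Var}(\sum_{i=1}^nf(X_i))$ is the asymptotic variance under the $\pi$-stationary kernel $K$, and the worst-case asymptotic variance is $V(K)=\sup\{v(f,K):f\in\ell^2_0(\pi),\ \|f\|_\pi=1\}$, where $\|f\|_\pi^2=\sum_xf(x)^2\pi(x)$; for reversible $K$ this equals $(1+\lambda_2(K))/(1-\lambda_2(K))$ with $\lambda_2$ the second largest eigenvalue. *)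

From HB Require Import structures.
From mathcomp Require Import all_boot all_order all_algebra.
From mathcomp Require Import boolp classical_sets reals ereal topology normedtype sequences.
Set Implicit Arguments. Unset Strict Implicit. Unset Printing Implicit Defensive.
Import Order.TTheory GRing.Theory Num.Theory.
Local Open Scope ring_scope.

(* State space X = 'I_n ; kernels are n x n matrices, K x y = K(x,y). *)
Section Defs.
Variables (R : realType) (n : nat).

Definition full_support_pmf (pi : 'I_n -> R) : Prop :=
  (forall x, 0 < pi x) /\ \sum_x pi x = 1.

Definition stochastic (K : 'M[R]_n) : Prop :=
  (forall x y, 0 <= K x y) /\ (forall x, \sum_y K x y = 1).

Definition reversible (pi : 'I_n -> R) (K : 'M[R]_n) : Prop :=
  forall x y, pi x * K x y = pi y * K y x.

(* ergodic (finite state space): irreducible and aperiodic, i.e. some power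
   of K has all entries positive *)
Definition ergodic (K : 'M[R]_n) : Prop :=
  exists k : nat, forall x y, 0 < (K ^+ k) x y.

(* all (complex) eigenvalues nonnegative; for a pi-reversible matrix all
   eigenvalues are real, so it suffices to quantify over real eigenvalues *)
Definition nonneg_spectrum (K : 'M[R]_n) : Prop :=
  forall a : R, eigenvalue K a -> 0 <= a.

Definition is_group (Gt : Type) (mul : Gt -> Gt -> Gt) (one : Gt)
  (inv : Gt -> Gt) : Prop :=
  [/\ forall a b c, mul a (mul b c) = mul (mul a b) c,
      forall a, mul one a = a, forall a, mul a one = a,
      forall a, mul (inv a) a = one & forall a, mul a (inv a) = one].

Definition is_action (Gt : Type) (mul : Gt -> Gt -> Gt) (one : Gt)
  (act : Gt -> 'I_n -> 'I_n) : Prop :=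
  (forall x, act one x = x) /\ (forall g h x, act (mul g h) x = act g (act h x)).

Definition orbit_of (Gt : Type) (act : Gt -> 'I_n -> 'I_n) (x : 'I_n)
  : {set 'I_n} :=
  [set y | `[< exists g, act g x = y >]].

Definition gibbs_kernel (pi : 'I_n -> R) (O : 'I_n -> {set 'I_n}) : 'M[R]_n :=
  \matrix_(x, y) (if y \in O x then pi y / \sum_(z in O x) pi z else 0).

Definition orbit_mh_kernel (acc : R -> R -> R) (pi : 'I_n -> R)
  (O : 'I_n -> {set 'I_n}) : 'M[R]_n :=
  let off x y := if (y \in O x) && (y != x)
                 then (#|O x|.-1)%:R^-1 * acc (pi x) (pi y) else 0 in
  \matrix_(x, y) (if y == x then 1 - \sum_(z | z != x) off x z else off x y).

Definition metropolis_kernel pi O :=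
  orbit_mh_kernel (fun px py => Num.min 1 (py / px)) pi O.

Definition barker_kernel pi O :=
  orbit_mh_kernel (fun px py => py / (px + py)) pi O.

(* Var(sum_{i=1}^N f(X_i)) for the stationary chain X_1 ~ pi driven by K:
   E[f(X_i) f(X_j)] = sum_{x,y} pi x f x (K^|i-j|) x y f y. *)
Definition var_sum (pi : 'I_n -> R) (K : 'M[R]_n) (f : 'I_n -> R) (N : nat) : R :=
  \sum_(i < N) \sum_(j < N) \sum_x \sum_y
      pi x * f x * (K ^+ (maxn i j - minn i j)) x y * f y
  - (N%:R * \sum_x f x * pi x) ^+ 2.

Definition asym_var (pi : 'I_n -> R) (K : 'M[R]_n) (f : 'I_n -> R) : \bar R :=
  limn (fun N : nat => ((var_sum pi K f N) / N%:R)%:E).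

Definition mean_zero (pi : 'I_n -> R) (f : 'I_n -> R) : Prop :=
  \sum_x f x * pi x = 0.

Definition pi_norm2 (pi : 'I_n -> R) (f : 'I_n -> R) : R :=
  \sum_x f x ^+ 2 * pi x.

Definition worst_var (pi : 'I_n -> R) (K : 'M[R]_n) : \bar R :=
  ereal_sup [set asym_var pi K f | f in
              [set f : 'I_n -> R | mean_zero pi f /\ pi_norm2 pi f = 1]].

End Defs.

From HB Require Import structures.
From mathcomp Require Import all_boot all_order all_algebra.
From mathcomp Require Import boolp classical_sets functions reals ereal.
From mathcomp Require Import topology normedtype sequences derive.
From mathcomp.algebra_tactics Require Import ring lra.
Import Order.TTheory GRing.Theory Num.Theory numFieldNormedType.Exports.
Set Implicit Arguments. Unset Strict Implicit. Unset Printing Implicit Defensive.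
Local Open Scope ring_scope.

(* Let A be a kernel that is self-adjoint on l^2(pi), positive semidefinite and fixes the
   constants, and let lam be the largest Rayleigh quotient <g, A g> / <g, g> over mean-zero
   g. The autocovariances <f, A^k f> of a mean-zero unit f are at most lam^k, with equality
   for a top eigenvector, so V(A) = (1 + lam) / (1 - lam), or +oo if lam >= 1: V(A) is
   monotone in lam. The top eigenvector is obtained without the spectral theorem, by
   maximising the Rayleigh quotient on a compact sphere.
   The orbit kernels G, M, B are pi-reversible Markov kernels, hence contractions of
   l^2(pi), and M G = B G = G since M and B only move within orbits, on which G resamples
   from pi. Thus <g, GPG g> = <Gg, KPK Gg> and <g, KPK g> = <Kg, P Kg> (K = M, B) bound
   the Rayleigh quotients of GPG by those of KPK, and those of KPK by those of P. Finally
   P is positive semidefinite because its spectrum is nonnegative. *)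

Section CovarianceAverage.
Variable R : realType.
Implicit Types (c : nat -> R) (t lam : R).

Definition covsum c N : R := \sum_(i < N) \sum_(j < N) c (maxn i j - minn i j)%N.

Definition lagsum c m : R := \sum_(k < m) c k.+1.

Definition cov_avg c N : R := covsum c N / N%:R.

Lemma covsumS c N : covsum c N.+1 = covsum c N + 2 * lagsum c N + c 0%N.
Proof.
rewrite /covsum big_ord_recr /=.
under eq_bigr do rewrite big_ord_recr /=.
rewrite big_split /= big_ord_recr /= maxnn minnn subnn.
have lastcol : \sum_(i < N) c (maxn (widen_ord (leqnSn N) i) N
                                 - minn (widen_ord (leqnSn N) i) N)%N = lagsum c N.
  rewrite /lagsum (reindex_inj rev_ord_inj) /=; apply: eq_bigr => i _.
  have iN : (N - i.+1 <= N)%N by rewrite leq_subr.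
  by rewrite (maxn_idPr iN) (minn_idPl iN) subKn.
have lastrow : \sum_(i < N) c (maxn N (widen_ord (leqnSn N) i)
                                - minn N (widen_ord (leqnSn N) i))%N = lagsum c N.
  by rewrite -lastcol; apply: eq_bigr => i _; rewrite maxnC minnC.
by rewrite lastcol lastrow; ring.
Qed.

Lemma covsumE c N : covsum c N = N%:R * c 0%N + 2 * \sum_(m < N) lagsum c m.
Proof.
elim: N => [|N IH]; first by rewrite /covsum !big_ord0 mul0r mulr0 addr0.
by rewrite covsumS IH big_ord_recr /= -natr1; ring.
Qed.

Lemma lagsum_le c m N : (forall k, 0 <= c k) -> (m <= N)%N -> lagsum c m <= lagsum c N.
Proof.
move=> c_ge0 /subnKC <-; rewrite /lagsum big_split_ord /= lerDl.
by apply: sumr_ge0.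
Qed.

Lemma cov_avg_nondecreasing c : (forall k, 0 <= c k) -> nondecreasing_seq (cov_avg c).
Proof.
move=> c_ge0; apply/nondecreasing_seqP; rewrite /cov_avg => -[|M].
  rewrite invr0 mulr0 divr_ge0 // covsumE addr_ge0 ?mulr_ge0 //.
  by apply: sumr_ge0 => m _; apply: sumr_ge0.
set N := M.+1; rewrite ler_pdivrMr // mulrAC ler_pdivlMr // covsumS -natr1.
have lag_sum_le : \sum_(m < N) lagsum c m <= N%:R * lagsum c N.
  apply: le_trans (_ : \sum_(m < N) lagsum c N <= _); last first.
    by rewrite sumr_const card_ord mulr_natl.
  by apply: ler_sum => m _; apply: lagsum_le => //; exact: ltnW.
by rewrite covsumE; nra.
Qed.

Lemma covsum_le c c' N : (forall k, c k <= c' k) -> covsum c N <= covsum c' N.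
Proof. by move=> le_cc'; apply: ler_sum => i _; apply: ler_sum. Qed.

Lemma lagsum_geometric t m : (1 - t) * lagsum (fun k => t ^+ k) m = t - t ^+ m.+1.
Proof.
have geo : (1 - t) * \sum_(i < m) t ^+ i = 1 - t ^+ m.
  by rewrite -opprB mulNr -subrX1 opprB.
rewrite /lagsum; under eq_bigr do rewrite exprS.
by rewrite -mulr_sumr mulrCA geo exprS; ring.
Qed.

Lemma covsum_geometric t N :
  (1 - t) ^+ 2 * covsum (fun k => t ^+ k) N = N%:R * (1 - t ^+ 2) - 2 * t * (1 - t ^+ N).
Proof.
elim: N => [|N IH]; first by rewrite /covsum big_ord0 expr0; ring.
rewrite covsumS !mulrDr IH.
have -> : (1 - t) ^+ 2 * (2 * lagsum (fun k => t ^+ k) N)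
          = 2 * (1 - t) * ((1 - t) * lagsum (fun k => t ^+ k) N) by ring.
by rewrite lagsum_geometric -natr1 !exprS expr0; ring.
Qed.

Lemma cov_avg_le_geometric c lam N :
  (forall k, c k <= lam ^+ k) -> 0 <= lam < 1 -> cov_avg c N <= (1 + lam) / (1 - lam).
Proof.
move=> c_le /andP[lam_ge0 lam_lt1]; have lam1 : 0 < 1 - lam by rewrite subr_gt0.
have bound_ge0 : 0 <= (1 + lam) / (1 - lam).
  by apply: divr_ge0; [exact: addr_ge0 | exact: ltW].
rewrite /cov_avg; case: N => [|M]; first by rewrite invr0 mulr0.
set N := M.+1; rewrite ler_pdivrMr //; apply: le_trans (covsum_le N c_le) _.
rewrite -(ler_pM2l (_ : 0 < (1 - lam) ^+ 2)) ?exprn_gt0 // covsum_geometric.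
have -> : (1 - lam) ^+ 2 * ((1 + lam) / (1 - lam) * N%:R) = N%:R * (1 - lam ^+ 2).
  by field; rewrite gt_eqF.
rewrite gerBl mulr_ge0 ?mulr_ge0 ?subr_ge0 ?exprn_ile1 //; exact: ltW.
Qed.

Lemma cov_avg_ge_geometric c t N : (forall k, t ^+ k <= c k) -> 0 <= t < 1 -> (0 < N)%N ->
  (1 + t) / (1 - t) - 2 * t / (1 - t) ^+ 2 / N%:R <= cov_avg c N.
Proof.
move=> le_c /andP[t_ge0 t_lt1] N_gt0; have t1 : 0 < 1 - t by rewrite subr_gt0.
have N0 : (0 : R) < N%:R by rewrite ltr0n.
rewrite /cov_avg ler_pdivlMr //; apply: le_trans (covsum_le N le_c).
rewrite -(ler_pM2l (_ : 0 < (1 - t) ^+ 2)) ?exprn_gt0 // covsum_geometric.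
have -> : (1 - t) ^+ 2 * (((1 + t) / (1 - t) - 2 * t / (1 - t) ^+ 2 / N%:R) * N%:R)
          = N%:R * (1 - t ^+ 2) - 2 * t.
  by field; rewrite !gt_eqF.
by rewrite lerD2l lerN2 ler_piMr ?mulr_ge0 // gerDl oppr_le0 exprn_ge0.
Qed.

Local Open Scope ereal_scope.

Lemma limn_cov_avg c : (forall k, (0 <= c k)%R) ->
  limn (fun N => (cov_avg c N)%:E) = ereal_sup (range (fun N => (cov_avg c N)%:E)).
Proof.
move=> c_ge0; apply: cvg_lim => //; apply: ereal_nondecreasing_cvgn => N M NM.
by rewrite lee_fin (cov_avg_nondecreasing c_ge0).
Qed.

Lemma ereal_sup_cov_avg_le c lam : (forall k, (c k <= lam ^+ k)%R) -> (0 <= lam < 1)%R ->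
  ereal_sup (range (fun N => (cov_avg c N)%:E)) <= ((1 + lam) / (1 - lam))%:E.
Proof.
by move=> c_le lam01; apply: ge_ereal_sup => _ [N _ <-]; rewrite lee_fin cov_avg_le_geometric.
Qed.

Lemma ereal_sup_cov_avg_ge c t : (forall k, (t ^+ k <= c k)%R) -> (0 <= t < 1)%R ->
  ((1 + t) / (1 - t))%:E <= ereal_sup (range (fun N => (cov_avg c N)%:E)).
Proof.
move=> le_c t01; apply/lee_addgt0Pr => e e_gt0.
have /andP[t_ge0 t_lt1] := t01.
set C := (2 * t / (1 - t) ^+ 2)%R.
have C_ge0 : (0 <= C)%R by rewrite divr_ge0 ?sqr_ge0 ?mulr_ge0.
set N := Num.bound (C / e).
have CeN : (C / e < N%:R)%R by rewrite archi_boundP // divr_ge0 // ltW.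
have N_gt0 : (0 < N)%N by rewrite -(ltr0n R); apply: le_lt_trans CeN; rewrite divr_ge0 // ltW.
have CN_le : (C / N%:R <= e)%R.
  by rewrite ler_pdivrMr ?ltr0n // mulrC -ler_pdivrMr // ltW.
apply: (@le_trans _ _ ((cov_avg c N)%:E + e%:E)); last first.
  by rewrite leeD2r //; apply: ereal_sup_ubound; exists N.
rewrite -EFinD lee_fin; have := cov_avg_ge_geometric le_c t01 N_gt0; rewrite -/C; lra.
Qed.

Lemma geometric_ratio_unbounded (x : \bar R) :
  (forall t, (0 <= t < 1)%R -> ((1 + t) / (1 - t))%:E <= x) -> x = +oo.
Proof.
move=> le_x; apply: eq_infty => r; set s := Num.max r 0%R.
have s_ge0 : (0 <= s)%R by rewrite le_max lexx orbT.
have r_le : (r <= s)%R by rewrite le_max lexx.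
have s2 : (0 < s + 2)%R by rewrite ltr_wpDl.
have t01 : (0 <= s / (s + 2) < 1)%R.
  by rewrite divr_ge0 ?(ltW s2) //= ltr_pdivrMr // mul1r ltrDl.
have ratio : ((1 + s / (s + 2)) / (1 - s / (s + 2)) = s + 1)%R.
  by field; rewrite gt_eqF //; lra.
apply: le_trans (le_x _ t01); rewrite ratio lee_fin; lra.
Qed.

End CovarianceAverage.

Section PiInnerProduct.
Variables (R : realType) (n : nat) (pi : 'I_n -> R).
Implicit Types (t lam : R) (u v w f g : 'I_n -> R) (A B K : 'M[R]_n).

Lemma scalefE t v x : (t *: v) x = t * v x.
Proof. by []. Qed.

Definition dotpi u v : R := \sum_x pi x * u x * v x.

Definition mxapp K v : 'I_n -> R := fun x => \sum_y K x y * v y.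

Lemma dotpiC u v : dotpi u v = dotpi v u.
Proof. by apply: eq_bigr => x _; ring. Qed.

Lemma dotpiDr u v w : dotpi u (v + w) = dotpi u v + dotpi u w.
Proof. by rewrite /dotpi -big_split; apply: eq_bigr => x _; rewrite !fctE /=; ring. Qed.

Lemma dotpiZr t u v : dotpi u (t *: v) = t * dotpi u v.
Proof. by rewrite /dotpi mulr_sumr; apply: eq_bigr => x _; rewrite scalefE; ring. Qed.

Lemma dotpiBr u v w : dotpi u (v - w) = dotpi u v - dotpi u w.
Proof. by rewrite /dotpi -sumrB; apply: eq_bigr => x _; rewrite !fctE /=; ring. Qed.

Lemma dotpiNr u v : dotpi u (- v) = - dotpi u v.
Proof. by rewrite /dotpi -sumrN; apply: eq_bigr => x _; rewrite !fctE /=; ring. Qed.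

Lemma dotpi0r u : dotpi u 0 = 0.
Proof. by rewrite /dotpi big1 // => x _; rewrite mulr0. Qed.

Lemma dotpiDl u v w : dotpi (u + v) w = dotpi u w + dotpi v w.
Proof. by rewrite dotpiC dotpiDr !(dotpiC w). Qed.

Lemma dotpiZl t u v : dotpi (t *: u) v = t * dotpi u v.
Proof. by rewrite dotpiC dotpiZr dotpiC. Qed.

Lemma dotpiBl u v w : dotpi (u - v) w = dotpi u w - dotpi v w.
Proof. by rewrite dotpiC dotpiBr !(dotpiC w). Qed.

Lemma dotpiNl u v : dotpi (- u) v = - dotpi u v.
Proof. by rewrite dotpiC dotpiNr dotpiC. Qed.

Lemma dotpi0l u : dotpi 0 u = 0.
Proof. by rewrite dotpiC dotpi0r. Qed.

Lemma mxappD K u v : mxapp K (u + v) = mxapp K u + mxapp K v.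
Proof.
apply/funext => x; rewrite /mxapp !fctE /= -big_split.
by apply: eq_bigr => y _; rewrite mulrDr.
Qed.

Lemma mxappZ K t v : mxapp K (t *: v) = t *: mxapp K v.
Proof.
apply/funext => x; rewrite scalefE /mxapp mulr_sumr.
by apply: eq_bigr => y _; rewrite scalefE mulrCA.
Qed.

Lemma mxapp0 K : mxapp K 0 = 0.
Proof. by apply/funext => x; rewrite /mxapp big1 // => y _; rewrite mulr0. Qed.

Lemma mxappBl A B v : mxapp (A - B) v = mxapp A v - mxapp B v.
Proof.
apply/funext => x; rewrite /mxapp !fctE /= -sumrB.
by apply: eq_bigr => y _; rewrite !mxE mulrBl.
Qed.

Lemma mxappNl K v : mxapp (- K) v = - mxapp K v.
Proof.
apply/funext => x; rewrite /mxapp !fctE /= -sumrN.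
by apply: eq_bigr => y _; rewrite mxE mulNr.
Qed.

Lemma mxapp_scalar t v : mxapp t%:M v = t *: v.
Proof.
apply/funext => x; rewrite scalefE /mxapp (bigD1 x) //= big1 ?addr0 => [|y yx].
  by rewrite mxE eqxx mulr1n.
by rewrite mxE eq_sym (negbTE yx) mulr0n mul0r.
Qed.

Lemma mxapp1 v : mxapp 1 v = v.
Proof. by rewrite -[1 : 'M_n]/(1%:M) mxapp_scalar scale1r. Qed.

Lemma mxappM A B v : mxapp (A *m B) v = mxapp A (mxapp B v).
Proof.
apply/funext => x; rewrite /mxapp.
under eq_bigr do rewrite mxE big_distrl.
rewrite exchange_big; apply: eq_bigr => z _.
by rewrite big_distrr; apply: eq_bigr => y _; rewrite /= mulrA.
Qed.

Lemma mxappXS K k v : mxapp (K ^+ k.+1) v = mxapp K (mxapp (K ^+ k) v).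
Proof. by rewrite exprS -mulmxE mxappM. Qed.

Definition selfadj K := forall u v, dotpi (mxapp K u) v = dotpi u (mxapp K v).

Definition psd K := forall u, 0 <= dotpi u (mxapp K u).

(* Constraints are orthogonality to a fixed [w]: [w = 0] imposes none, [w = 1] means
   mean zero. *)
Definition psd_on w K := forall u, dotpi w u = 0 -> 0 <= dotpi u (mxapp K u).

Definition rayleigh_le w K lam :=
  forall g, dotpi w g = 0 -> dotpi g (mxapp K g) <= lam * dotpi g g.

Definition autocov K f (k : nat) : R := dotpi f (mxapp (K ^+ k) f).

Lemma selfadj1 : selfadj 1.
Proof. by move=> u v; rewrite !mxapp1. Qed.

Lemma selfadj_fixed_orth K w g :
  selfadj K -> mxapp K w = w -> dotpi w g = 0 -> dotpi w (mxapp K g) = 0.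
Proof. by move=> sK Kw wg; rewrite -sK Kw. Qed.

Lemma selfadj_fixedX_orth K w g k :
  selfadj K -> mxapp K w = w -> dotpi w g = 0 -> dotpi w (mxapp (K ^+ k) g) = 0.
Proof.
move=> sK Kw wg; elim: k => [|k IH]; first by rewrite expr0 mxapp1.
by rewrite mxappXS selfadj_fixed_orth.
Qed.

Lemma quadratic_ge0_discriminant (a c d : R) :
  0 <= a -> (forall t, 0 <= a * t ^+ 2 + 2 * d * t + c) -> d ^+ 2 <= a * c.
Proof.
move=> a_ge0 q_ge0; have [a_gt0|] := ltrP 0 a.
  have := q_ge0 (- d / a).
  have -> : a * (- d / a) ^+ 2 + 2 * d * (- d / a) + c = c - d ^+ 2 / a.
    by field; rewrite gt_eqF.
  by rewrite subr_ge0 ler_pdivrMr // mulrC.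
move=> a_le0; have a0 : a = 0 by apply/eqP; rewrite eq_le a_le0 a_ge0.
rewrite {}a0 in q_ge0 *.
have [->|d_neq0] := eqVneq d 0; first by rewrite expr0n mul0r.
have := q_ge0 (- (c + 1) / (2 * d)).
have -> : 0 * (- (c + 1) / (2 * d)) ^+ 2 + 2 * d * (- (c + 1) / (2 * d)) + c = -1.
  by field.
by move=> ?; lra.
Qed.

Lemma psd_cauchy_schwarz w K u v : selfadj K -> psd_on w K -> dotpi w u = 0 -> dotpi w v = 0 ->
  dotpi u (mxapp K v) ^+ 2 <= dotpi u (mxapp K u) * dotpi v (mxapp K v).
Proof.
move=> sK pK wu wv; apply: quadratic_ge0_discriminant => [|t]; first exact: pK.
have Kvu : dotpi v (mxapp K u) = dotpi u (mxapp K v) by rewrite -sK dotpiC.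
have := pK (t *: u + v); rewrite dotpiDr dotpiZr wu wv mulr0 add0r => /(_ erefl).
by rewrite mxappD mxappZ !dotpiDl !dotpiDr !dotpiZl !dotpiZr Kvu; lra.
Qed.

Lemma dotpi_mxappXD K a b u v : selfadj K ->
  dotpi u (mxapp (K ^+ (a + b)) v) = dotpi (mxapp (K ^+ a) u) (mxapp (K ^+ b) v).
Proof.
move=> sK; elim: a b => [|a IH] b; first by rewrite expr0 mxapp1 add0n.
by rewrite addSnnS IH !mxappXS sK.
Qed.

Lemma mxappX_eigen K lam f k : mxapp K f = lam *: f -> mxapp (K ^+ k) f = lam ^+ k *: f.
Proof.
move=> Kf; elim: k => [|k IH]; first by rewrite expr0 mxapp1 scale1r.
by rewrite mxappXS IH mxappZ Kf scalerA exprSr.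
Qed.

Lemma autocov_eigen K lam f k : mxapp K f = lam *: f -> dotpi f f = 1 -> autocov K f k = lam ^+ k.
Proof. by move=> Kf f1; rewrite /autocov (mxappX_eigen k Kf) dotpiZr f1 mulr1. Qed.

Hypothesis pi_pos : forall x, 0 < pi x.

Lemma dotpi_self_ge0 u : 0 <= dotpi u u.
Proof. by apply: sumr_ge0 => x _; rewrite -mulrA -expr2 mulr_ge0 ?sqr_ge0 // ltW. Qed.

Lemma dotpi_self_eq0 u : dotpi u u = 0 -> u = 0.
Proof.
move=> /eqP; rewrite psumr_eq0 => [/allP u0|x _]; last first.
  by rewrite -mulrA -expr2 mulr_ge0 ?sqr_ge0 // ltW.
apply/funext => x; have /= := u0 x (mem_index_enum x).
by rewrite -mulrA mulf_eq0 gt_eqF //= mulf_eq0 orbb => /eqP.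
Qed.

Lemma psd1 : psd 1.
Proof. by move=> u; rewrite mxapp1 dotpi_self_ge0. Qed.

Lemma autocov_ge0 K f k : selfadj K -> psd K -> 0 <= autocov K f k.
Proof.
move=> sK pK; rewrite /autocov -(odd_double_half k) -addnn.
case: (odd k) => /=; last by rewrite add0n dotpi_mxappXD // dotpi_self_ge0.
by rewrite add1n -addnS dotpi_mxappXD // mxappXS pK.
Qed.

Lemma rayleigh_le_norm w K lam g : selfadj K -> psd K -> mxapp K w = w -> 0 <= lam ->
  rayleigh_le w K lam -> dotpi w g = 0 ->
  dotpi (mxapp K g) (mxapp K g) <= lam ^+ 2 * dotpi g g.
Proof.
move=> sK pK Kw lam_ge0 K_le wg; have wKg := selfadj_fixed_orth sK Kw wg.
set s := dotpi (mxapp K g) (mxapp K g).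
have s_sqr_le : s ^+ 2 <= (lam ^+ 2 * dotpi g g) * s.
  have := psd_cauchy_schwarz sK (fun u _ => pK u) wg wKg; rewrite -sK => /le_trans; apply.
  rewrite [_ * s](_ : _ = (lam * dotpi g g) * (lam * s)); last by ring.
  by apply: ler_pM; rewrite ?pK ?K_le.
have [s0|s_neq0] := eqVneq s 0; first by rewrite s0 mulr_ge0 ?sqr_ge0 ?dotpi_self_ge0.
by rewrite -(ler_pM2r (_ : 0 < s)) ?lt_def ?s_neq0 ?dotpi_self_ge0 // -expr2.
Qed.

Lemma autocov_le_expr w K lam f k : selfadj K -> psd K -> mxapp K w = w -> 0 <= lam ->
  rayleigh_le w K lam -> dotpi w f = 0 -> dotpi f f = 1 -> autocov K f k <= lam ^+ k.
Proof.
move=> sK pK Kw lam_ge0 Kle wf f1.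
have norm_le : dotpi (mxapp (K ^+ k) f) (mxapp (K ^+ k) f) <= (lam ^+ k) ^+ 2.
  rewrite -exprM mulnC exprM; elim: k => [|k IH]; first by rewrite expr0 mxapp1 f1 expr0.
  rewrite mxappXS exprS; apply: le_trans (rayleigh_le_norm sK pK Kw lam_ge0 Kle _) _.
    exact: selfadj_fixedX_orth.
  by rewrite ler_wpM2l // sqr_ge0.
have := psd_cauchy_schwarz selfadj1 (fun u _ => psd1 u) (dotpi0l f) (dotpi0l (mxapp (K ^+ k) f)).
rewrite !mxapp1 f1 mul1r -/(autocov K f k) => cs.
have := exprn_ge0 k lam_ge0; have := le_trans cs norm_le; nra.
Qed.

End PiInnerProduct.

Section RayleighMaximum.
Variables (R : realType) (n : nat) (pi : 'I_n -> R).
Hypothesis pi_pos : forall x, 0 < pi x.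
Implicit Types (lam : R) (w f g : 'I_n -> R) (K : 'M[R]_n).

Lemma rayleigh_le_unit w K lam :
  (forall g, dotpi pi w g = 0 -> dotpi pi g g = 1 -> dotpi pi g (mxapp K g) <= lam) ->
  rayleigh_le pi w K lam.
Proof.
move=> le_lam g wg; have [g0|g_neq0] := eqVneq (dotpi pi g g) 0.
  by rewrite (dotpi_self_eq0 pi_pos g0) mxapp0 dotpi0r mulr0.
have g_gt0 : 0 < dotpi pi g g by rewrite lt_def g_neq0 dotpi_self_ge0.
pose s := Num.sqrt (dotpi pi g g).
have scale2 (a : R) : s^-1 * (s^-1 * a) = a / dotpi pi g g.
  by rewrite mulrA -invfM -expr2 (sqr_sqrtr (ltW g_gt0)) mulrC.
have := le_lam (s^-1 *: g); rewrite mxappZ !dotpiZl !dotpiZr wg mulr0 !scale2.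
by rewrite divff ?gt_eqF // => /(_ erefl erefl); rewrite ler_pdivrMr // mulrC.
Qed.

Lemma rayleigh_le_eigen w K lam f : selfadj pi K -> mxapp K w = w -> rayleigh_le pi w K lam ->
  dotpi pi w f = 0 -> dotpi pi f (mxapp K f) = lam * dotpi pi f f -> mxapp K f = lam *: f.
Proof.
(* The form of [lam - K] is nonnegative on the constraint space and vanishes at [f]: by
   Cauchy-Schwarz, [(lam - K) f] is orthogonal to itself. *)
move=> sK Kw K_le wf f_eq.
pose Q := lam%:M - K.
have QE v : mxapp Q v = lam *: v - mxapp K v by rewrite mxappBl mxapp_scalar.
have sQ : selfadj pi Q by move=> u v; rewrite !QE dotpiBl dotpiBr dotpiZl dotpiZr sK.
have pQ : psd_on pi w Q by move=> u wu; rewrite QE dotpiBr dotpiZr subr_ge0 K_le.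
have fQf : dotpi pi f (mxapp Q f) = 0 by rewrite QE dotpiBr dotpiZr f_eq subrr.
have wQf : dotpi pi w (mxapp Q f) = 0 by rewrite -sQ QE Kw dotpiBl dotpiZl wf mulr0 subrr.
have := psd_cauchy_schwarz sQ pQ wQf wf; rewrite fQf mulr0.
move=> sqr_le0; have /eqP : dotpi pi (mxapp Q f) (mxapp Q f) ^+ 2 = 0.
  by apply/eqP; rewrite eq_le sqr_le0 sqr_ge0.
rewrite sqrf_eq0 => /eqP /(dotpi_self_eq0 pi_pos); rewrite QE => /subr0_eq.
by move=> <-.
Qed.

Section Compactness.
Import ArrowAsProduct.

Lemma dotpi_continuous (F G : ('I_n -> R) -> 'I_n -> R) :
  (forall x, continuous (fun f => F f x)) -> (forall x, continuous (fun f => G f x)) ->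
  continuous (fun f => dotpi pi (F f) (G f)).
Proof.
move=> cF cG; apply: continuous_big => [|x _]; first exact: add_continuous.
move=> f; apply: (@continuousM _ _ (fun f => pi x * F f x)); last exact: cG.
by apply: (@continuousM _ _ (fun=> pi x)); [exact: cst_continuous | exact: cF].
Qed.

Lemma mxapp_continuous K x : continuous (fun f => mxapp K f x).
Proof.
apply: continuous_big => [|y _]; first exact: add_continuous.
move=> f; apply: (@continuousM _ _ (fun=> K x y)); first exact: cst_continuous.
exact: proj_continuous.
Qed.

Lemma unit_sphere_compact w : compact [set f | dotpi pi w f = 0 /\ dotpi pi f f = 1].
Proof.
pose c x := 1 + (pi x)^-1.
have box_compact : compact [set f : 'I_n -> R | forall x, `[- c x, c x]%classic (f x)].
  by apply: (@tychonoff _ (fun=> R) (fun x => `[- c x, c x]%classic)) => x; exact: segment_compact.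
apply: subclosed_compact box_compact _.
  apply: closedI.
    apply: (@preimage_closed _ _ (fun f => dotpi pi w f) [set 0]); last exact: closed_eq.
    move=> f _; apply: dotpi_continuous => x; first exact: cst_continuous.
    exact: proj_continuous.
  apply: (@preimage_closed _ _ (fun f => dotpi pi f f) [set 1]); last exact: closed_eq.
  by move=> f _; apply: dotpi_continuous => x; exact: proj_continuous.
move=> f [_ f1] x /=; rewrite in_itv /=.
have fx_le : pi x * f x ^+ 2 <= 1.
  rewrite -f1 /dotpi (bigD1 x) //= -mulrA -expr2 lerDl.
  by apply: sumr_ge0 => y _; rewrite -mulrA -expr2 mulr_ge0 ?sqr_ge0 ?ltW.
have : f x ^+ 2 <= (pi x)^-1 by rewrite -(ler_pM2l (pi_pos x)) mulfV ?gt_eqF.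
have : 0 < (pi x)^-1 by rewrite invr_gt0.
rewrite /c; move: ((pi x)^-1) => p; nra.
Qed.

Lemma exists_rayleigh_max w K : (exists f, dotpi pi w f = 0 /\ dotpi pi f f = 1) ->
  exists2 f, dotpi pi w f = 0 /\ dotpi pi f f = 1 &
    forall g, dotpi pi w g = 0 -> dotpi pi g g = 1 ->
      dotpi pi g (mxapp K g) <= dotpi pi f (mxapp K f).
Proof.
move=> sphere_neq0.
have cont : continuous (fun f => dotpi pi f (mxapp K f)).
  by apply: dotpi_continuous => x; [exact: proj_continuous | exact: mxapp_continuous].
have [f /set_mem f_sphere f_max] :=
  compact_EVT_max sphere_neq0 (@unit_sphere_compact w) (continuous_subspaceT cont).
by exists f => // g wg g1; apply: f_max; rewrite inE.
Qed.

End Compactness.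

Lemma exists_top_eigen w K : selfadj pi K -> mxapp K w = w ->
  (exists f, dotpi pi w f = 0 /\ dotpi pi f f = 1) ->
  exists f lam, [/\ dotpi pi w f = 0, dotpi pi f f = 1, mxapp K f = lam *: f &
                    rayleigh_le pi w K lam].
Proof.
move=> sK Kw /(exists_rayleigh_max K) [f [wf f1] f_max].
have K_le : rayleigh_le pi w K (dotpi pi f (mxapp K f)) by exact: rayleigh_le_unit.
exists f, (dotpi pi f (mxapp K f)); split => //.
by apply: (rayleigh_le_eigen sK Kw K_le wf); rewrite f1 mulr1.
Qed.

End RayleighMaximum.

Section WorstCaseVariance.
Variables (R : realType) (n : nat) (pi : 'I_n -> R).
Hypothesis pi_pos : forall x, 0 < pi x.
Implicit Types (t lam : R) (f g : 'I_n -> R) (A B K : 'M[R]_n).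

Lemma mean_zeroE f : mean_zero pi f <-> dotpi pi 1 f = 0.
Proof.
suff -> : dotpi pi 1 f = \sum_x f x * pi x by [].
by apply: eq_bigr => x _; rewrite /= mulr1 mulrC.
Qed.

Lemma pi_norm2E f : pi_norm2 pi f = dotpi pi f f.
Proof. by apply: eq_bigr => x _; rewrite expr2; ring. Qed.

Lemma var_sum_covsum K f N : mean_zero pi f -> var_sum pi K f N = covsum (autocov pi K f) N.
Proof.
move=> f0; rewrite /var_sum f0 mulr0 expr0n subr0.
apply: eq_bigr => i _; apply: eq_bigr => j _; rewrite /autocov /dotpi /mxapp.
by apply: eq_bigr => x _; rewrite mulr_sumr; apply: eq_bigr => y _; ring.
Qed.

Lemma asym_var_sup K f : mean_zero pi f -> (forall k, 0 <= autocov pi K f k) ->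
  asym_var pi K f = ereal_sup (range (fun N => (cov_avg (autocov pi K f) N)%:E)).
Proof.
move=> f0 c_ge0; rewrite -limn_cov_avg //; congr (limn _); apply/funext => N.
by rewrite var_sum_covsum.
Qed.

Lemma asym_var_le_rayleigh K lam f : selfadj pi K -> psd pi K -> mxapp K 1 = 1 ->
  rayleigh_le pi 1 K lam -> 0 <= lam < 1 -> mean_zero pi f -> dotpi pi f f = 1 ->
  (asym_var pi K f <= ((1 + lam) / (1 - lam))%:E)%E.
Proof.
move=> sK pK K1 K_le lam01 f0 f1; have /andP[lam_ge0 _] := lam01.
rewrite asym_var_sup // => [|k]; last exact: autocov_ge0.
apply: ereal_sup_cov_avg_le lam01 => k.
exact (autocov_le_expr pi_pos k sK pK K1 lam_ge0 K_le ((mean_zeroE f).1 f0) f1).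
Qed.

Lemma asym_var_eigen_ge K lam t f : mxapp K f = lam *: f -> mean_zero pi f -> dotpi pi f f = 1 ->
  0 <= t <= lam -> t < 1 -> (((1 + t) / (1 - t))%:E <= asym_var pi K f)%E.
Proof.
move=> Kf f0 f1 /andP[t_ge0 t_le] t_lt1; have lam_ge0 := le_trans t_ge0 t_le.
have cE k : autocov pi K f k = lam ^+ k by exact: autocov_eigen.
rewrite asym_var_sup // => [|k]; last by rewrite cE exprn_ge0.
apply: ereal_sup_cov_avg_ge => [k|]; last by rewrite t_ge0.
by rewrite cE lerXn2r.
Qed.

Lemma worst_var_le_of_rayleigh A B :
  selfadj pi A -> psd pi A -> mxapp A 1 = 1 -> selfadj pi B -> psd pi B -> mxapp B 1 = 1 ->
  (forall lam, 0 <= lam -> rayleigh_le pi 1 B lam -> rayleigh_le pi 1 A lam) ->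
  (worst_var pi A <= worst_var pi B)%E.
Proof.
move=> sA pA A1 sB pB B1 BA; apply: ge_ereal_sup => _ [f [f0 f1] <-].
rewrite pi_norm2E in f1.
have [phi [lam [/mean_zeroE phi0 phi1 Bphi B_le]]] :=
  exists_top_eigen pi_pos sB B1 (ex_intro _ f (conj ((mean_zeroE f).1 f0) f1)).
have lam_ge0 : 0 <= lam by have := pB phi; rewrite Bphi dotpiZr phi1 mulr1.
have phi_le t : 0 <= t <= lam -> t < 1 -> (((1 + t) / (1 - t))%:E <= worst_var pi B)%E.
  move=> t_le t_lt1; apply: le_trans (asym_var_eigen_ge Bphi phi0 phi1 t_le t_lt1) _.
  by apply: ereal_sup_ubound; exists phi => //; split; rewrite ?pi_norm2E.
have [lam_lt1|lam_ge1] := ltP lam 1.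
  apply: le_trans (phi_le lam _ lam_lt1); last by rewrite lam_ge0 lexx.
  have lam01 : 0 <= lam < 1 by rewrite lam_ge0 lam_lt1.
  exact: asym_var_le_rayleigh sA pA A1 (BA _ lam_ge0 B_le) lam01 f0 f1.
suff -> : worst_var pi B = +oo%E by exact: leey.
apply: geometric_ratio_unbounded => t /andP[t_ge0 t_lt1].
by apply: (phi_le t) => //; rewrite t_ge0 (le_trans (ltW t_lt1) lam_ge1).
Qed.

End WorstCaseVariance.

Section ReversibleKernels.
Variables (R : realType) (n : nat) (pi : 'I_n -> R).
Hypothesis pi_pos : forall x, 0 < pi x.
Implicit Types (lam : R) (f g : 'I_n -> R) (G K P : 'M[R]_n).

Lemma reversible_selfadj K : reversible pi K -> selfadj pi K.
Proof.
move=> rK u v; rewrite /dotpi /mxapp.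
transitivity (\sum_x \sum_y pi x * K x y * u y * v x).
  by apply: eq_bigr => x _; rewrite mulrAC mulr_sumr; apply: eq_bigr => y _; ring.
rewrite exchange_big; apply: eq_bigr => y _; rewrite mulr_sumr.
by apply: eq_bigr => x _; rewrite rK; ring.
Qed.

Lemma stochastic_mxapp1 K : stochastic K -> mxapp K 1 = 1.
Proof.
by move=> [_ K1]; apply/funext => x; rewrite -[RHS](K1 x); apply: eq_bigr => y _; rewrite mulr1.
Qed.

Lemma sqr_convex_comb (c a : 'I_n -> R) : (forall y, 0 <= c y) -> \sum_y c y = 1 ->
  (\sum_y c y * a y) ^+ 2 <= \sum_y c y * a y ^+ 2.
Proof.
move=> c_ge0 c1.
have expand m : \sum_y c y * (a y - m) ^+ 2
    = \sum_y c y * a y ^+ 2 - 2 * m * (\sum_y c y * a y) + m ^+ 2 * \sum_y c y.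
  by rewrite !mulr_sumr -sumrN -!big_split; apply: eq_bigr => y _ /=; ring.
have : 0 <= \sum_y c y * (a y - \sum_z c z * a z) ^+ 2.
  by apply: sumr_ge0 => y _; rewrite mulr_ge0 ?sqr_ge0.
rewrite expand c1; lra.
Qed.

Lemma stochastic_contraction K g : stochastic K -> reversible pi K ->
  dotpi pi (mxapp K g) (mxapp K g) <= dotpi pi g g.
Proof.
move=> stK rK; have -> : dotpi pi g g = dotpi pi (mxapp K (fun x => g x ^+ 2)) 1.
  rewrite reversible_selfadj // stochastic_mxapp1 //.
  by apply: eq_bigr => x _; rewrite /= mulr1 expr2 mulrA.
apply: ler_sum => x _; rewrite /= mulr1 -mulrA -expr2 (ler_wpM2l (ltW (pi_pos x))) //.
by case: stK => K_ge0 K1; apply: sqr_convex_comb.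
Qed.

Lemma selfadj_conj K P : selfadj pi K -> selfadj pi P -> selfadj pi (K *m P *m K).
Proof. by move=> sK sP u v; rewrite !mxappM sK sP sK. Qed.

Lemma psd_conj K P : selfadj pi K -> psd pi P -> psd pi (K *m P *m K).
Proof. by move=> sK pP u; rewrite !mxappM -sK. Qed.

Lemma mxapp1_conj K P : mxapp K 1 = 1 -> mxapp P 1 = 1 -> mxapp (K *m P *m K) 1 = 1.
Proof. by move=> K1 P1; rewrite !mxappM K1 P1 K1. Qed.

Lemma reversible_eigenvalue K lam f : reversible pi K -> mxapp K f = lam *: f ->
  dotpi pi f f != 0 -> eigenvalue K lam.
Proof.
move=> rK Kf f_neq0; apply/eigenvalueP; exists (\row_y (pi y * f y)).
  apply/rowP => y; rewrite !mxE mulrCA -scalefE -Kf /mxapp mulr_sumr.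
  by apply: eq_bigr => z _; rewrite mxE mulrAC rK; ring.
apply: contra_neq f_neq0 => /rowP v0; rewrite /dotpi big1 // => y _.
by have := v0 y; rewrite !mxE => ->; rewrite mul0r.
Qed.

Lemma nonneg_spectrum_psd P : reversible pi P -> nonneg_spectrum P -> psd pi P.
Proof.
(* [-P] attains its largest Rayleigh quotient [lam] at an eigenvector, so [-lam] is an
   eigenvalue of [P]. *)
move=> rP specP u; have [x0 _|no_state] := pickP (@predT 'I_n); last first.
  by rewrite [dotpi _ _ _]big1 // => x; have := no_state x.
have sNP : selfadj pi (- P).
  by move=> v g; rewrite !mxappNl dotpiNl dotpiNr reversible_selfadj.
pose e : 'I_n -> R := (Num.sqrt (pi x0))^-1 *: (fun x => (x == x0)%:R).
have e1 : dotpi pi e e = 1.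
  rewrite dotpiZl dotpiZr /dotpi (bigD1 x0) //= eqxx big1 => [|x /negbTE ->]; last first.
    by rewrite mulr0.
  by rewrite addr0 !mulr1 mulrA -invfM -expr2 sqr_sqrtr ?mulVf ?gt_eqF // ltW.
have [f [lam [_ f1 NPf NP_le]]] :=
  exists_top_eigen pi_pos sNP (mxapp0 _) (ex_intro _ e (conj (dotpi0l pi e) e1)).
have Pf : mxapp P f = - lam *: f by apply: oppr_inj; rewrite -mxappNl NPf scaleNr opprK.
have lam_le0 : lam <= 0.
  by rewrite -oppr_ge0 specP // (reversible_eigenvalue rP Pf) // f1 oner_neq0.
have := NP_le u (dotpi0l pi u); rewrite mxappNl dotpiNr.
have := dotpi_self_ge0 pi_pos u; nra.
Qed.

Lemma worst_var_conj_le K P : stochastic K -> reversible pi K ->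
  stochastic P -> reversible pi P -> psd pi P ->
  (worst_var pi (K *m P *m K) <= worst_var pi P)%E.
Proof.
move=> stK rK stP rP pP.
have [sK K1] := (reversible_selfadj rK, stochastic_mxapp1 stK).
have [sP P1] := (reversible_selfadj rP, stochastic_mxapp1 stP).
apply: (worst_var_le_of_rayleigh pi_pos (selfadj_conj sK sP) (psd_conj sK pP)
  (mxapp1_conj K1 P1) sP pP P1) => lam lam_ge0 P_le g g0.
rewrite !mxappM -sK; apply: le_trans (P_le _ (selfadj_fixed_orth sK K1 g0)) _.
by rewrite ler_wpM2l // stochastic_contraction.
Qed.

Lemma worst_var_conj_absorb G K P : stochastic G -> reversible pi G ->
  stochastic K -> reversible pi K -> K *m G = G ->
  stochastic P -> reversible pi P -> psd pi P ->
  (worst_var pi (G *m P *m G) <= worst_var pi (K *m P *m K))%E.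
Proof.
move=> stG rG stK rK KG stP rP pP.
have [sG G1] := (reversible_selfadj rG, stochastic_mxapp1 stG).
have [sK K1] := (reversible_selfadj rK, stochastic_mxapp1 stK).
have [sP P1] := (reversible_selfadj rP, stochastic_mxapp1 stP).
apply: (worst_var_le_of_rayleigh pi_pos (selfadj_conj sG sP) (psd_conj sG pP)
  (mxapp1_conj G1 P1) (selfadj_conj sK sP) (psd_conj sK pP) (mxapp1_conj K1 P1)).
move=> lam lam_ge0 KPK_le g g0.
have KGg : mxapp K (mxapp G g) = mxapp G g by rewrite -mxappM KG.
have KPK_Gg := KPK_le _ (selfadj_fixed_orth sG G1 g0).
rewrite !mxappM -sK KGg in KPK_Gg.
rewrite !mxappM -sG; apply: le_trans KPK_Gg _.
by rewrite ler_wpM2l // stochastic_contraction.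
Qed.

End ReversibleKernels.

Definition acceptance (R : realType) (acc : R -> R -> R) :=
  forall a b, 0 < a -> 0 < b -> [/\ 0 <= acc a b, acc a b <= 1 & a * acc a b = b * acc b a].

Lemma metropolis_acceptance (R : realType) : acceptance (fun a b : R => Num.min 1 (b / a)).
Proof.
move=> a b a_gt0 b_gt0; split; first by rewrite le_min ler01 divr_ge0 ?ltW.
  by rewrite ge_min lexx.
have [ab|ba] := leP a b.
  rewrite (min_l (_ : 1 <= b / a)) ?ler_pdivlMr ?mul1r //.
  by rewrite (min_r (_ : a / b <= 1)) ?ler_pdivrMr ?mul1r // mulr1 mulrC divfK ?gt_eqF.
rewrite (min_r (_ : b / a <= 1)) ?ler_pdivrMr ?mul1r ?ltW //.
by rewrite (min_l (_ : 1 <= a / b)) ?ler_pdivlMr ?mul1r ?ltW // mulr1 mulrC divfK ?gt_eqF.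
Qed.

Lemma barker_acceptance (R : realType) : acceptance (fun a b : R => b / (a + b)).
Proof.
move=> a b a_gt0 b_gt0; have ab_gt0 : 0 < a + b by rewrite addr_gt0.
split; first by rewrite divr_ge0 ?ltW.
  by rewrite ler_pdivrMr // mul1r lerDr ltW.
by rewrite addrC; field; rewrite gt_eqF // addrC.
Qed.

Section OrbitKernels.
Variables (R : realType) (n : nat) (pi : 'I_n -> R).
Hypothesis pi_pos : forall x, 0 < pi x.
Variables (Gt : Type) (mul : Gt -> Gt -> Gt) (one : Gt) (inv : Gt -> Gt).
Variable act : Gt -> 'I_n -> 'I_n.
Hypotheses (group_Gt : is_group mul one inv) (action_act : is_action mul one act).

Local Notation O := (orbit_of act).

Lemma orbitP x y : reflect (exists g, act g x = y) (y \in O x).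
Proof. by rewrite inE; exact: asboolP. Qed.

Lemma orbit_refl x : x \in O x.
Proof. by apply/orbitP; exists one; case: action_act. Qed.

Lemma orbit_transl x y : y \in O x -> O y = O x.
Proof.
case: action_act => _ act_mul; case: group_Gt => mulA _ mulg1 mulVg _.
move=> /orbitP[g <-]; apply/setP => z; apply/orbitP/orbitP => -[h <-].
  by exists (mul h g); rewrite act_mul.
by exists (mul h (inv g)); rewrite -act_mul -mulA mulVg mulg1.
Qed.

Lemma orbit_sym x y : y \in O x -> x \in O y.
Proof. by move=> xy; rewrite (orbit_transl xy) orbit_refl. Qed.

Let orbit_mass x : R := \sum_(z in O x) pi z.

Lemma orbit_mass_gt0 x : 0 < orbit_mass x.
Proof.
rewrite /orbit_mass (bigD1 x) ?orbit_refl //= ltr_pwDl //.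
by apply: sumr_ge0 => z _; exact: ltW.
Qed.

Local Notation G := (gibbs_kernel pi O).

Lemma gibbsE x y : G x y = if y \in O x then pi y / orbit_mass x else 0.
Proof. by rewrite mxE. Qed.

Lemma gibbs_stochastic : stochastic G.
Proof.
split=> [x y|x]; first by rewrite gibbsE; case: ifP => // _; rewrite divr_ge0 ?ltW ?orbit_mass_gt0.
under eq_bigr do rewrite gibbsE.
by rewrite -big_mkcond /= -mulr_suml divff // gt_eqF // orbit_mass_gt0.
Qed.

Lemma gibbs_reversible : reversible pi G.
Proof.
move=> x y; rewrite !gibbsE; have [xy|not_xy] := boolP (y \in O x).
  by rewrite orbit_sym // /orbit_mass (orbit_transl xy); ring.
by rewrite (negbTE (contra (@orbit_sym y x) not_xy)) !mulr0.
Qed.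

Lemma mulmx_gibbs K : stochastic K -> (forall x y, K x y != 0 -> y \in O x) -> K *m G = G.
Proof.
move=> [_ K1] K_orbit; apply/matrixP => x z; rewrite mxE.
transitivity (\sum_y K x y * G x z); last by rewrite -mulr_suml K1 mul1r.
apply: eq_bigr => y _; have [->|Kxy] := eqVneq (K x y) 0; first by rewrite !mul0r.
by rewrite !gibbsE /orbit_mass (orbit_transl (K_orbit _ _ Kxy)).
Qed.

Variable acc : R -> R -> R.
Hypothesis acc_acceptance : acceptance acc.

Local Notation K := (orbit_mh_kernel acc pi O).

Let proposal x y : R :=
  if (y \in O x) && (y != x) then (#|O x|.-1)%:R^-1 * acc (pi x) (pi y) else 0.

Lemma orbit_mhE x y : K x y = if y == x then 1 - \sum_(z | z != x) proposal x z else proposal x y.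
Proof. by rewrite mxE. Qed.

Lemma proposal_ge0 x y : 0 <= proposal x y.
Proof.
rewrite /proposal; case: ifP => // _; have [acc_ge0 _ _] := acc_acceptance (pi_pos x) (pi_pos y).
by rewrite mulr_ge0 ?invr_ge0.
Qed.

Lemma proposal_sum_le1 x : \sum_(z | z != x) proposal x z <= 1.
Proof.
set c : R := (#|O x|.-1)%:R^-1.
have -> : \sum_(z | z != x) proposal x z = \sum_(z in O x :\ x) c * acc (pi x) (pi z).
  rewrite big_mkcond [RHS]big_mkcond; apply: eq_bigr => z _.
  by rewrite in_setD1 /proposal andbC; case: (z != x).
apply: le_trans (_ : \sum_(z in O x :\ x) c <= _).
  apply: ler_sum => z _; have [_ acc_le1 _] := acc_acceptance (pi_pos x) (pi_pos z).
  by rewrite ler_piMr ?invr_ge0.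
rewrite sumr_const (_ : #|O x :\ x| = #|O x|.-1); last first.
  by rewrite [in RHS](cardsD1 x) orbit_refl.
rewrite /c; case: (#|O x|.-1) => [|k]; first by rewrite mulr0n ler01.
by rewrite -[_ *+ _]mulr_natr mulVf // pnatr_eq0.
Qed.

Lemma orbit_mh_stochastic : stochastic K.
Proof.
split=> [x y|x]; rewrite ?orbit_mhE.
  by case: ifP => _; rewrite ?subr_ge0 ?proposal_sum_le1 ?proposal_ge0.
rewrite (bigD1 x) //= orbit_mhE eqxx; under eq_bigr => y /negbTE yx do rewrite orbit_mhE yx.
by rewrite subrK.
Qed.

Lemma orbit_mh_reversible : reversible pi K.
Proof.
move=> x y; rewrite !orbit_mhE; have [->//|yx] := eqVneq y x.
rewrite /proposal yx eq_sym yx !andbT; have [xy|not_xy] := boolP (y \in O x).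
  have [_ _ acc_sym] := acc_acceptance (pi_pos x) (pi_pos y).
  by rewrite orbit_sym // (orbit_transl xy) mulrCA acc_sym mulrCA.
by rewrite (negbTE (contra (@orbit_sym y x) not_xy)) !mulr0.
Qed.

Lemma orbit_mh_support x y : K x y != 0 -> y \in O x.
Proof.
rewrite orbit_mhE; have [->|yx] := eqVneq y x; first by rewrite orbit_refl.
by rewrite /proposal yx andbT; case: ifP => //; rewrite eqxx.
Qed.

Lemma worst_var_orbit_mh P : stochastic P -> reversible pi P -> psd pi P ->
  (worst_var pi (G *m P *m G) <= worst_var pi (K *m P *m K))%E /\
  (worst_var pi (K *m P *m K) <= worst_var pi P)%E.
Proof.
move=> stP rP pP; have KG := mulmx_gibbs orbit_mh_stochastic orbit_mh_support.
split; first exact (worst_var_conj_absorb pi_pos gibbs_stochastic gibbs_reversible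
  orbit_mh_stochastic orbit_mh_reversible KG stP rP pP).
exact (worst_var_conj_le pi_pos orbit_mh_stochastic orbit_mh_reversible stP rP pP).
Qed.

End OrbitKernels.

Theorem proposition4p2 (R : realType) (n : nat) (pi : 'I_n -> R) (P : 'M[R]_n)
  (Gt : Type) (mul : Gt -> Gt -> Gt) (one : Gt) (inv : Gt -> Gt)
  (act : Gt -> 'I_n -> 'I_n) :
  full_support_pmf pi ->
  stochastic P -> reversible pi P -> ergodic P -> nonneg_spectrum P ->
  is_group mul one inv -> is_action mul one act ->
  let G := gibbs_kernel pi (orbit_of act) in
  let M := metropolis_kernel pi (orbit_of act) in
  let B := barker_kernel pi (orbit_of act) in
  [/\ (worst_var pi (G *m P *m G) <= worst_var pi (M *m P *m M))%E,
      (worst_var pi (M *m P *m M) <= worst_var pi P)%E,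
      (worst_var pi (G *m P *m G) <= worst_var pi (B *m P *m B))%E &
      (worst_var pi (B *m P *m B) <= worst_var pi P)%E].
Proof.
move=> [pi_pos _] stP rP _ specP group_Gt action_act G M B.
have pP := nonneg_spectrum_psd pi_pos rP specP.
have [GM MP] := worst_var_orbit_mh pi_pos group_Gt action_act (@metropolis_acceptance R) stP rP pP.
have [GB BP] := worst_var_orbit_mh pi_pos group_Gt action_act (@barker_acceptance R) stP rP pP.
by split; [exact GM | exact MP | exact GB | exact BP].
Qed.
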